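(* Let $X$ be a proper CAT(0)-space and $g$ an isometry of $X$ with unbounded orbits. Then the centralizer of $g$ in the isometry group of $X$ fixes a point in the visual boundary $\partial X$ of $X$.
   Context: A metric space is proper if closed bounded sets are compact. The visual boundary $\partial X$ of a proper CAT(0)-space is the set of equivalence classes of geodesic rays (two rays equivalent if at bounded distance), with the cone topology; isometries act on it naturally. *)

From Stdlib Require Import Reals List.
Open Scope R_scope.
Import ListNotations.

Section MetricDefs.
Variable X : Type.
Variable d : X -> X -> R.

Definition is_metric : Prop :=
  (forall x y, 0 <= d x y) /\
  (forall x y, d x y = 0 <-> x = y) /\
  (forall x y, d x y = d y x) /\
  (forall x y z, d x z <= d x y + d y z).

Definition m_open (U : X -> Prop) : Prop :=
  forall x, U x -> exists e, 0 < e /\ forall y, d x y < e -> U y.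

Definition m_closed (S : X -> Prop) : Prop := m_open (fun x => ~ S x).

Definition m_bounded (S : X -> Prop) : Prop :=
  exists x0 M, forall y, S y -> d x0 y <= M.

Definition m_compact (S : X -> Prop) : Prop :=
  forall (I : Type) (U : I -> X -> Prop),
    (forall i, m_open (U i)) ->
    (forall x, S x -> exists i, U i x) ->
    exists l : list I, forall x, S x -> exists i, In i l /\ U i x.

Definition proper_space : Prop :=
  forall S, m_closed S -> m_bounded S -> m_compact S.

Definition geodesic_seg (c : R -> X) (x y : X) : Prop :=
  c 0 = x /\ c (d x y) = y /\
  forall s t, 0 <= s <= d x y -> 0 <= t <= d x y -> d (c s) (c t) = Rabs (s - t).

Definition geodesic_space : Prop :=
  forall x y, exists c, geodesic_seg c x y.

End MetricDefs.

Definition e2dist (p q : R * R) : R :=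
  sqrt ((fst p - fst q) ^ 2 + (snd p - snd q) ^ 2).

Definition seg_pt (a b : R * R) (L s : R) : R * R :=
  (fst a + (s / L) * (fst b - fst a), snd a + (s / L) * (snd b - snd a)).

Definition CAT0 (X : Type) (d : X -> X -> R) : Prop :=
  is_metric X d /\ geodesic_space X d /\
  forall (x y z : X) (cxy cyz czx : R -> X),
    geodesic_seg X d cxy x y -> geodesic_seg X d cyz y z -> geodesic_seg X d czx z x ->
    forall xb yb zb : R * R,
      e2dist xb yb = d x y -> e2dist yb zb = d y z -> e2dist zb xb = d z x ->
      let sides := [(cxy, d x y, xb, yb); (cyz, d y z, yb, zb); (czx, d z x, zb, xb)] in
      forall S1 S2 s t,
        In S1 sides -> In S2 sides ->
        match S1, S2 with
        | (c1, L1, a1, b1), (c2, L2, a2, b2) =>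
            0 <= s <= L1 -> 0 <= t <= L2 ->
            d (c1 s) (c2 t) <= e2dist (seg_pt a1 b1 L1 s) (seg_pt a2 b2 L2 t)
        end.

Definition isometry (X : Type) (d : X -> X -> R) (g : X -> X) : Prop :=
  (forall x y, d (g x) (g y) = d x y) /\ (forall y, exists x, g x = y).

(** The <g>-orbit of x: { g^n x | n in Z }. *)
Definition orbit (X : Type) (g : X -> X) (x : X) (y : X) : Prop :=
  exists n : nat, y = Nat.iter n g x \/ x = Nat.iter n g y.

Definition unbounded_orbits (X : Type) (d : X -> X -> R) (g : X -> X) : Prop :=
  exists x, ~ m_bounded X d (orbit X g x).

(** Geodesic rays and asymptoticity (points of the visual boundary are classes). *)
Definition geodesic_ray (X : Type) (d : X -> X -> R) (c : R -> X) : Prop :=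
  forall s t, 0 <= s -> 0 <= t -> d (c s) (c t) = Rabs (s - t).

Definition asymptotic (X : Type) (d : X -> X -> R) (c c' : R -> X) : Prop :=
  exists M, forall t, 0 <= t -> d (c t) (c' t) <= M.

(** The isometry h fixes the boundary point [c] (action: [c] |-> [h o c]). *)
Definition fixes_boundary_point (X : Type) (d : X -> X -> R) (h : X -> X) (c : R -> X) : Prop :=
  asymptotic X d (fun t => h (c t)) c.

Definition centralizer (X : Type) (d : X -> X -> R) (g : X -> X) (h : X -> X) : Prop :=
  isometry X d h /\ forall x, h (g x) = g (h x).

(* Let [h] commute with [g]. Then [h] displaces every point [g^n x0] of the orbit by the
   same amount [D = d (h x0) x0], and since the displacement function of an isometry is
   convex along geodesics of a CAT(0) space, [h] moves every point of a geodesic from [x0]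
   to [g^n x0] by at most [D]. The orbit being unbounded, these geodesics get arbitrarily
   long; by properness and the CAT(0) inequality a subsequence of them converges pointwise
   to a geodesic ray [c] issuing from [x0] (a diagonal Arzela-Ascoli argument). The bound
   [D] survives in the limit, so [h o c] stays within [D] of [c] and [h] fixes [c(oo)]. *)

From Stdlib Require Import Reals Lra Psatz Lia List Classical ClassicalEpsilon.
Open Scope R_scope.

Lemma eventually_ge_of_ge_INR (f : nat -> R) :
  (forall k, INR k <= f k) -> forall t, exists N, forall k, (N <= k)%nat -> t <= f k.
Proof.
  intros Hf t. destruct (INR_archimed 1 t) as [N HN]; [lra|].
  exists N. intros k Hk. apply le_INR in Hk. specialize (Hf k). lra.
Qed.

Lemma Rdiv_unit_interval s L : 0 < L -> 0 <= s <= L -> 0 <= s / L <= 1.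
Proof.
  intros HL Hs. assert (s / L * L = s) by (field; lra). split; nra.
Qed.

Definition infinite (P : nat -> Prop) : Prop :=
  forall N, exists n, (N <= n)%nat /\ P n.

Lemma infinite_tail (P : nat -> Prop) k :
  infinite P -> infinite (fun n => P n /\ (k <= n)%nat).
Proof.
  intros HP N. destruct (HP (Nat.max N k)) as [n [Hn HPn]].
  exists n. repeat split; auto; lia.
Qed.

Lemma list_upper_bound (A : Type) (f : A -> nat) (l : list A) :
  exists N, forall a, In a l -> (f a <= N)%nat.
Proof.
  induction l as [|a l [N HN]].
  - exists 0%nat. intros a [].
  - exists (Nat.max (f a) N). intros b [<-|Hb]; [lia|]. specialize (HN b Hb). lia.
Qed.

Lemma diagonal_subsequence (Rel : nat -> nat -> nat -> Prop) :
  (forall k P, infinite P -> exists Q, infinite Q /\ (forall n, Q n -> P n) /\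
     forall i j, Q i -> Q j -> Rel k i j) ->
  exists ns : nat -> nat, (forall k, (k <= ns k)%nat) /\
    forall k i j, (k <= i)%nat -> (k <= j)%nat -> Rel k (ns i) (ns j).
Proof.
  intros Hstep.
  destruct (choice (fun (kP : nat * (nat -> Prop)) Q => infinite (snd kP) ->
      infinite Q /\ (forall n, Q n -> snd kP n) /\ forall i j, Q i -> Q j -> Rel (fst kP) i j))
    as [F HF].
  { intros [k P]. destruct (classic (infinite P)) as [HP|HP].
    - destruct (Hstep k P HP) as [Q HQ]. exists Q. auto.
    - exists P. intros; contradiction. }
  (* The sets [PP k] are nested, so [ns i] and [ns j] lie in [PP k] once [i, j >= k]. *)
  pose (PP := fix PP (k : nat) : nat -> Prop :=
          match k with
          | O => F (O, fun _ => True)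
          | S k' => F (k, fun n => PP k' n /\ (k <= n)%nat)
          end).
  assert (HPP : forall k, infinite (PP k) /\ (forall n, PP k n -> (k <= n)%nat) /\
                  forall i j, PP k i -> PP k j -> Rel k i j).
  { induction k as [|k IHk].
    - destruct (HF (O, fun _ => True)) as [H1 [_ H3]]; [intros N; exists N; split; [lia|exact I]|].
      split; [exact H1|split; [intros; lia|exact H3]].
    - destruct (HF (S k, fun n => PP k n /\ (S k <= n)%nat)) as [H1 [H2 H3]];
        [apply infinite_tail, IHk|].
      split; [exact H1|split; [intros n Hn; apply (H2 n Hn)|exact H3]]. }
  assert (Hnest : forall k k', (k <= k')%nat -> forall n, PP k' n -> PP k n).
  { intros k k' Hk. induction Hk as [|k' Hk IH]; auto.
    intros n Hn. apply IH.
    destruct (HF (S k', fun n => PP k' n /\ (S k' <= n)%nat)) as [_ [H2 _]];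
      [apply infinite_tail, HPP|].
    apply (H2 n Hn). }
  destruct (choice (fun k n => PP k n)) as [ns Hns].
  { intros k. destruct (proj1 (HPP k) O) as [n [_ Hn]]. eauto. }
  exists ns. split.
  - intros k. apply (proj1 (proj2 (HPP k))), Hns.
  - intros k i j Hi Hj. apply (proj2 (proj2 (HPP k))).
    + apply (Hnest k i Hi), Hns.
    + apply (Hnest k j Hj), Hns.
Qed.

Section Metric.

Variables (X : Type) (d : X -> X -> R).
Hypothesis Hd : is_metric X d.

Lemma dist_nonneg x y : 0 <= d x y.
Proof. destruct Hd as [H _]. apply H. Qed.

Lemma dist_refl x : d x x = 0.
Proof. destruct Hd as [_ [H _]]. apply H; reflexivity. Qed.

Lemma dist_sym x y : d x y = d y x.
Proof. destruct Hd as [_ [_ [H _]]]. apply H. Qed.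

Lemma dist_triangle x y z : d x z <= d x y + d y z.
Proof. destruct Hd as [_ [_ [_ H]]]. apply H. Qed.

Lemma geodesic_seg_rev (c : R -> X) x y :
  geodesic_seg X d c x y -> geodesic_seg X d (fun s => c (d x y - s)) y x.
Proof.
  intros [Hx [Hy Hc]]. unfold geodesic_seg. rewrite (dist_sym y x). split; [|split].
  - now replace (d x y - 0) with (d x y) by ring.
  - now replace (d x y - d x y) with 0 by ring.
  - intros s t Hs Ht. rewrite Hc by lra.
    replace (d x y - s - (d x y - t)) with (- (s - t)) by ring. apply Rabs_Ropp.
Qed.

Lemma geodesic_seg_dist_start (c : R -> X) x y t :
  geodesic_seg X d c x y -> 0 <= t <= d x y -> d x (c t) = t.
Proof.
  intros [Hx [_ Hc]] Ht. rewrite <- Hx at 1. rewrite Hc by lra.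
  rewrite Rabs_minus_sym, Rminus_0_r. apply Rabs_right. lra.
Qed.

Lemma geodesic_seg_restrict (c : R -> X) x y K :
  geodesic_seg X d c x y -> 0 <= K <= d x y -> geodesic_seg X d c x (c K).
Proof.
  intros Hc HK. pose proof (geodesic_seg_dist_start c x y K Hc HK) as E.
  destruct Hc as [Hx [_ Hc]]. unfold geodesic_seg. rewrite E. split; [|split]; auto.
  intros s t Hs Ht. apply Hc; lra.
Qed.

Lemma geodesic_seg_isometric_image (h : X -> X) (c : R -> X) x y :
  (forall u v, d (h u) (h v) = d u v) ->
  geodesic_seg X d c x y -> geodesic_seg X d (fun s => h (c s)) (h x) (h y).
Proof.
  intros Hh [Hx [Hy Hc]]. unfold geodesic_seg. rewrite Hh. split; [|split].
  - now rewrite Hx.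
  - now rewrite Hy.
  - intros s t Hs Ht. rewrite Hh. auto.
Qed.

Definition converges (u : nat -> X) (p : X) : Prop :=
  forall e, 0 < e -> exists N, forall k, (N <= k)%nat -> d p (u k) < e.

Definition cauchy (u : nat -> X) : Prop :=
  forall e, 0 < e -> exists N, forall i j, (N <= i)%nat -> (N <= j)%nat -> d (u i) (u j) < e.

Lemma converges_isometric_image (h : X -> X) (u : nat -> X) p :
  (forall x y, d (h x) (h y) = d x y) -> converges u p -> converges (fun k => h (u k)) (h p).
Proof.
  intros Hh Hu e He. destruct (Hu e He) as [N HN].
  exists N. intros k Hk. rewrite Hh. auto.
Qed.

Lemma limit_dist_bounds (u v : nat -> X) a b lo hi :
  converges u a -> converges v b ->
  (exists N, forall k, (N <= k)%nat -> lo <= d (u k) (v k) <= hi) ->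
  lo <= d a b <= hi.
Proof.
  intros Hu Hv [N HN].
  assert (Hclose : forall e, 0 < e -> exists k,
             d a (u k) < e /\ d b (v k) < e /\ lo <= d (u k) (v k) <= hi).
  { intros e He. destruct (Hu e He) as [N1 H1]. destruct (Hv e He) as [N2 H2].
    exists (Nat.max N (Nat.max N1 N2)).
    repeat split; try apply H1; try apply H2; try apply HN; lia. }
  split; apply Rle_plus_epsilon; intros e He;
    destruct (Hclose (e / 2)) as [k [Ha [Hb Hk]]]; try lra.
  - pose proof (dist_triangle (u k) a (v k)). pose proof (dist_triangle a b (v k)).
    rewrite (dist_sym (u k) a) in *. lra.
  - pose proof (dist_triangle a (u k) b). pose proof (dist_triangle (u k) (v k) b).
    rewrite (dist_sym (v k) b) in *. lra.
Qed.

Lemma limit_of_geodesics_is_ray x0 (y : nat -> X) (u : nat -> R -> X) (c : R -> X) :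
  (forall k, geodesic_seg X d (u k) x0 (y k)) -> (forall k, INR k <= d x0 (y k)) ->
  (forall t, 0 <= t -> converges (fun k => u k t) (c t)) ->
  geodesic_ray X d c.
Proof.
  intros Hu Hlen Hc s t Hs Ht.
  enough (Rabs (s - t) <= d (c s) (c t) <= Rabs (s - t)) by lra.
  apply (limit_dist_bounds (fun k => u k s) (fun k => u k t)); auto.
  destruct (eventually_ge_of_ge_INR _ Hlen (Rmax s t)) as [N HN].
  exists N. intros k Hk. specialize (HN k Hk).
  destruct (Hu k) as [_ [_ Hiso]].
  rewrite Hiso by (pose proof (Rmax_l s t); pose proof (Rmax_r s t); lra). lra.
Qed.

Lemma ball_open p e : m_open X d (fun y => d p y < e).
Proof.
  intros y Hy. exists (e - d p y). split; [lra|].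
  intros z Hz. pose proof (dist_triangle p y z). lra.
Qed.

Lemma cball_closed p r : m_closed X d (fun y => d p y <= r).
Proof.
  intros y Hy. exists (d p y - r). split; [lra|].
  intros z Hz Hzr. pose proof (dist_triangle p z y). rewrite (dist_sym z y) in *. lra.
Qed.

Lemma cball_compact p r : proper_space X d -> m_compact X d (fun y => d p y <= r).
Proof.
  intros Hp. apply Hp; [apply cball_closed|]. exists p, r. auto.
Qed.

Lemma compact_cluster_point (K : X -> Prop) (x : nat -> X) (P : nat -> Prop) :
  m_compact X d K -> infinite P -> (forall n, P n -> K (x n)) ->
  exists p, forall e, 0 < e -> infinite (fun n => P n /\ d p (x n) < e).
Proof.
  intros HK HP HPK. apply NNPP. intros Hno.
  assert (Hsep : forall y, exists eN : R * nat, 0 < fst eN /\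
                   forall n, (snd eN <= n)%nat -> P n -> fst eN <= d y (x n)).
  { intros y. apply NNPP. intros Hy. apply Hno. exists y.
    intros e He N. apply NNPP. intros HN. apply Hy. exists (e, N). split; auto.
    intros n Hn HPn. apply Rnot_lt_le. intros Hlt. apply HN. exists n. auto. }
  destruct (choice _ Hsep) as [eN HeN].
  destruct (HK X (fun y z => d y z < fst (eN y))) as [l Hl].
  - intros y. apply ball_open.
  - intros y _. exists y. rewrite dist_refl. apply HeN.
  - destruct (list_upper_bound X (fun y => snd (eN y)) l) as [N HN].
    destruct (HP N) as [n [HNn HPn]].
    destruct (Hl (x n) (HPK n HPn)) as [y [Hy Hlt]].
    assert (Hge : fst (eN y) <= d y (x n)).
    { apply HeN; auto. specialize (HN y Hy). simpl in HN. lia. }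
    lra.
Qed.

Lemma compact_close_subfamily (K : X -> Prop) (x : nat -> X) (P : nat -> Prop) e :
  m_compact X d K -> infinite P -> (forall n, P n -> K (x n)) -> 0 < e ->
  exists Q, infinite Q /\ (forall n, Q n -> P n) /\
    forall i j, Q i -> Q j -> d (x i) (x j) < e.
Proof.
  intros HK HP HPK He.
  destruct (compact_cluster_point K x P HK HP HPK) as [p Hp].
  exists (fun n => P n /\ d p (x n) < e / 2). split; [apply Hp; lra|split].
  - intros n [Hn _]. exact Hn.
  - intros i j [_ Hi] [_ Hj]. pose proof (dist_triangle (x i) p (x j)).
    rewrite (dist_sym (x i) p) in *. lra.
Qed.

Lemma cauchy_converges (u : nat -> X) :
  proper_space X d -> cauchy u -> exists p, converges u p.
Proof.
  intros Hp Hu. destruct (Hu 1 Rlt_0_1) as [N0 HN0].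
  destruct (compact_cluster_point (fun z => d (u N0) z <= 1) u (fun k => (N0 <= k)%nat))
    as [p Hclus].
  - apply cball_compact, Hp.
  - intros N. exists (Nat.max N N0). split; lia.
  - intros n Hn. left. apply HN0; lia.
  - exists p. intros e He. destruct (Hu (e / 2)) as [N HN]; [lra|].
    exists N. intros k Hk. destruct (Hclus (e / 2) ltac:(lra) N) as [n [Hn [_ Hpn]]].
    pose proof (dist_triangle p (u n) (u k)). specialize (HN n k Hn Hk). lra.
Qed.

End Metric.

Definition e2lerp (a b : R * R) (t : R) : R * R :=
  (fst a + t * (fst b - fst a), snd a + t * (snd b - snd a)).

Lemma e2lerp_rev a b t : e2lerp b a (1 - t) = e2lerp a b t.
Proof. unfold e2lerp. f_equal; ring. Qed.

Lemma seg_pt_scaled a b L t : e2dist a b = L -> seg_pt a b L (t * L) = e2lerp a b t.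
Proof.
  (* For [a = b] the division in [seg_pt] is by [0], but then [b - a] vanishes too. *)
  intros <-. unfold seg_pt, e2lerp. destruct (Req_dec (e2dist a b) 0) as [E|E].
  - unfold e2dist in E.
    apply sqrt_eq_0 in E; [|apply Rplus_le_le_0_compat; apply pow2_ge_0].
    rewrite <- !Rsqr_pow2 in E. apply Rplus_sqr_eq_0 in E as [E1 E2].
    replace (fst b - fst a) with 0 by lra. replace (snd b - snd a) with 0 by lra.
    rewrite !Rmult_0_r. reflexivity.
  - replace (t * e2dist a b / e2dist a b) with t by (field; exact E). reflexivity.
Qed.

Lemma e2dist_e2lerp a b c t :
  0 <= t -> e2dist (e2lerp a b t) (e2lerp a c t) = t * e2dist b c.
Proof.
  intros Ht. unfold e2dist, e2lerp; cbn [fst snd].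
  replace ((fst a + t * (fst b - fst a) - (fst a + t * (fst c - fst a))) ^ 2 +
           (snd a + t * (snd b - snd a) - (snd a + t * (snd c - snd a))) ^ 2)
    with (t * t * ((fst b - fst c) ^ 2 + (snd b - snd c) ^ 2)) by ring.
  rewrite sqrt_mult_alt, sqrt_square; nra.
Qed.

(* The third vertex [(u, v)] is found by the law of cosines. *)
Lemma euclidean_triangle_exists p q r :
  0 <= p -> 0 <= q -> 0 <= r -> r <= p + q -> p <= q + r -> q <= p + r ->
  exists zb, e2dist (0, 0) (p, 0) = p /\ e2dist (p, 0) zb = r /\ e2dist zb (0, 0) = q.
Proof.
  intros Hp Hq Hr T1 T2 T3.
  set (u := (p * p + q * q - r * r) / (2 * p)).
  assert (Hu : 2 * p * u = p * p + q * q - r * r).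
  { unfold u. destruct (Req_dec p 0) as [E|E].
    - rewrite E in *. replace r with q by lra. unfold Rdiv. ring.
    - field. exact E. }
  assert (Huq : u * u <= q * q).
  { destruct (Req_dec p 0) as [E|E].
    - unfold u. rewrite E in *. replace r with q by lra.
      replace (0 * 0 + q * q - q * q) with 0 by ring. unfold Rdiv. nra.
    - assert (Hp' : 0 < p) by lra.
      assert (u <= q) by (apply (Rmult_le_reg_l (2 * p)); nra).
      assert (- q <= u) by (apply (Rmult_le_reg_l (2 * p)); nra).
      nra. }
  set (v := sqrt (q * q - u * u)).
  assert (Hv : v * v = q * q - u * u) by (apply sqrt_sqrt; lra).
  exists (u, v). unfold e2dist; cbn [fst snd]. split; [|split].
  - replace ((0 - p) ^ 2 + (0 - 0) ^ 2) with (p * p) by ring. apply sqrt_square, Hp.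
  - replace ((p - u) ^ 2 + (0 - v) ^ 2) with (r * r) by nra. apply sqrt_square, Hr.
  - replace ((u - 0) ^ 2 + (v - 0) ^ 2) with (q * q) by nra. apply sqrt_square, Hq.
Qed.

Section CAT0.

Variables (X : Type) (d : X -> X -> R).
Hypothesis HC : CAT0 X d.

Let Hmetric : is_metric X d := proj1 HC.

Lemma cat0_dist_geodesics_le x y z (c c' : R -> X) a :
  geodesic_seg X d c x y -> geodesic_seg X d c' x z -> 0 <= a <= 1 ->
  d (c (a * d x y)) (c' (a * d x z)) <= a * d y z.
Proof.
  intros Hc Hc' Ha. pose proof HC as [_ [Hgeo Hcmp]].
  destruct (Hgeo y z) as [cyz Hyz].
  pose proof (dist_nonneg X d Hmetric) as Hpos.
  pose proof (dist_triangle X d Hmetric) as Htri. pose proof (dist_sym X d Hmetric) as Hsym.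
  assert (T1 : d y z <= d x y + d x z) by (rewrite (Hsym x y); apply Htri).
  assert (T2 : d x y <= d x z + d y z) by (rewrite (Hsym y z); apply Htri).
  destruct (euclidean_triangle_exists (d x y) (d x z) (d y z) (Hpos x y) (Hpos x z)
              (Hpos y z) T1 T2 (Htri x y z)) as [zb [E1 [E2 E3]]].
  specialize (Hcmp x y z c cyz _ Hc Hyz (geodesic_seg_rev X d Hmetric c' x z Hc') _ _ _ E1 E2
    (eq_trans E3 (Hsym x z)) (c, d x y, (0, 0), (d x y, 0))
    (fun s => c' (d x z - s), d z x, zb, (0, 0)) (a * d x y) ((1 - a) * d z x)).
  simpl in Hcmp. rewrite (Hsym z x) in Hcmp.
  replace (d x z - (1 - a) * d x z) with (a * d x z) in Hcmp by ring.
  assert (Hs : 0 <= a * d x y <= d x y) by (pose proof (Hpos x y); nra).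
  assert (Ht : 0 <= (1 - a) * d x z <= d x z) by (pose proof (Hpos x z); nra).
  eapply Rle_trans; [apply Hcmp; [now left | now right; right; left | exact Hs | exact Ht]|].
  rewrite (seg_pt_scaled _ _ _ _ E1), (seg_pt_scaled _ _ _ _ E3), e2lerp_rev,
    e2dist_e2lerp, E2; lra.
Qed.

Lemma cat0_geodesic_dist_shrink x y y' (c c' : R -> X) K t :
  geodesic_seg X d c x y -> geodesic_seg X d c' x y' ->
  0 < K <= d x y -> K <= d x y' -> 0 <= t <= K ->
  d (c t) (c' t) <= t / K * d (c K) (c' K).
Proof.
  intros Hc Hc' HK HK' Ht.
  assert (Hr : 0 <= K <= d x y) by lra. assert (Hr' : 0 <= K <= d x y') by lra.
  pose proof (cat0_dist_geodesics_le x (c K) (c' K) c c' (t / K)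
                (geodesic_seg_restrict X d c x y K Hc Hr)
                (geodesic_seg_restrict X d c' x y' K Hc' Hr')) as H.
  rewrite (geodesic_seg_dist_start X d c x y K Hc Hr),
    (geodesic_seg_dist_start X d c' x y' K Hc' Hr') in H.
  replace (t / K * K) with t in H by (field; lra).
  apply H, Rdiv_unit_interval; lra.
Qed.

Section Displacement.

Variable h : X -> X.
Hypothesis Hh : forall u v, d (h u) (h v) = d u v.

(* Compare [c] with a geodesic [c2] from [x] to [h y] in the triangles [(x, y, h y)] and
   [(h y, h x, x)]. *)
Lemma cat0_displacement_convex x y (c : R -> X) a :
  geodesic_seg X d c x y -> 0 <= a <= 1 ->
  d (h (c (a * d x y))) (c (a * d x y)) <= (1 - a) * d (h x) x + a * d (h y) y.
Proof.
  intros Hc Ha. pose proof HC as [_ [Hgeo _]].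
  pose proof (dist_sym X d Hmetric) as Hsym.
  destruct (Hgeo x (h y)) as [c2 Hc2].
  pose proof (cat0_dist_geodesics_le x y (h y) c c2 a Hc Hc2 Ha) as Hxy.
  pose proof (geodesic_seg_rev X d Hmetric _ _ _
                (geodesic_seg_isometric_image X d h c x y Hh Hc)) as Hhc.
  pose proof (geodesic_seg_rev X d Hmetric c2 x (h y) Hc2) as Hc2r.
  pose proof (cat0_dist_geodesics_le (h y) (h x) x _ _ (1 - a) Hhc Hc2r ltac:(lra)) as Hhx.
  cbv beta in Hhx. rewrite !Hh, (Hsym y x), (Hsym (h y) x) in Hhx.
  replace (d x y - (1 - a) * d x y) with (a * d x y) in Hhx by ring.
  replace (d x (h y) - (1 - a) * d x (h y)) with (a * d x (h y)) in Hhx by ring.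
  pose proof (dist_triangle X d Hmetric (h (c (a * d x y))) (c2 (a * d x (h y)))
                (c (a * d x y))) as Htri.
  rewrite (Hsym (c2 _)) in Htri. rewrite (Hsym y (h y)) in Hxy.
  lra.
Qed.

Lemma cat0_displacement_le_on_geodesic x y (c : R -> X) s :
  geodesic_seg X d c x y -> d (h y) y = d (h x) x -> 0 <= s <= d x y ->
  d (h (c s)) (c s) <= d (h x) x.
Proof.
  intros Hc Hxy Hs. destruct (Req_dec (d x y) 0) as [E|E].
  - replace s with 0 by lra. destruct Hc as [-> _]. lra.
  - pose proof (dist_nonneg X d Hmetric x y).
    replace s with (s / d x y * d x y) by (field; exact E).
    eapply Rle_trans.
    + apply cat0_displacement_convex; [exact Hc|]. apply Rdiv_unit_interval; lra.
    + rewrite Hxy. lra.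
Qed.

End Displacement.

Lemma cat0_geodesics_subsequence_converge x0 (y : nat -> X) (G : nat -> R -> X) :
  proper_space X d ->
  (forall j, INR j <= d x0 (y j)) -> (forall j, geodesic_seg X d (G j) x0 (y j)) ->
  exists (ns : nat -> nat) (c : R -> X), (forall k, INR k <= d x0 (y (ns k))) /\
    forall t, 0 <= t -> converges X d (fun k => G (ns k) t) (c t).
Proof.
  intros Hp Hlen HG.
  destruct (diagonal_subsequence (fun k i j => d (G i (INR k)) (G j (INR k)) < 2))
    as [ns [Hns Hclose]].
  { intros k P HP.
    destruct (compact_close_subfamily X d Hmetric (fun z => d x0 z <= INR k)
                (fun j => G j (INR k)) (fun j => P j /\ (k <= j)%nat) 2) as [Q [HQ [HQP HQd]]].
    - apply cball_compact; auto.
    - apply infinite_tail, HP.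
    - intros j [_ Hj]. apply le_INR in Hj.
      rewrite (geodesic_seg_dist_start X d _ x0 (y j)); [lra|apply HG|].
      pose proof (pos_INR k). pose proof (Hlen j). lra.
    - lra.
    - exists Q. split; [exact HQ|split; [|exact HQd]]. intros n Hn. apply HQP, Hn. }
  assert (Hlen' : forall k, INR k <= d x0 (y (ns k))).
  { intros k. eapply Rle_trans; [apply le_INR, Hns|apply Hlen]. }
  (* Geodesics from [x0] that are [2]-close at time [K] are [2 t / K]-close at time [t]. *)
  assert (Hcauchy : forall t, 0 <= t -> cauchy X d (fun k => G (ns k) t)).
  { intros t Ht e He.
    destruct (INR_archimed 1 (2 * t / e + t)) as [K HK]; [lra|]. rewrite Rmult_1_r in HK.
    assert (Hte : 0 <= 2 * t / e) by (apply Rmult_le_pos; [|apply Rlt_le, Rinv_0_lt_compat]; lra).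
    assert (H2t : 2 * t < e * INR K).
    { replace (2 * t) with (2 * t / e * e) by (field; lra). nra. }
    exists K. intros i j Hi Hj.
    pose proof (Rle_trans _ _ _ (le_INR _ _ Hi) (Hlen' i)).
    pose proof (Rle_trans _ _ _ (le_INR _ _ Hj) (Hlen' j)).
    eapply Rle_lt_trans.
    - apply (cat0_geodesic_dist_shrink x0 (y (ns i)) (y (ns j)) _ _ (INR K)); auto; lra.
    - specialize (Hclose K i j Hi Hj).
      pose proof (dist_nonneg X d Hmetric (G (ns i) (INR K)) (G (ns j) (INR K))).
      assert (Hq : t / INR K * INR K = t) by (field; lra).
      assert (0 <= t / INR K <= 1) by (apply Rdiv_unit_interval; lra).
      nra. }
  destruct (choice (fun t p => 0 <= t -> converges X d (fun k => G (ns k) t) p)) as [c Hc].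
  { intros t. destruct (Rle_dec 0 t) as [Ht|Ht].
    - destruct (cauchy_converges X d Hmetric _ Hp (Hcauchy t Ht)) as [p Hp'].
      exists p. auto.
    - exists x0. intros Ht'. contradiction. }
  exists ns, c. auto.
Qed.

End CAT0.

Lemma iter_isometry_dist (X : Type) (d : X -> X -> R) (g : X -> X) :
  (forall x y, d (g x) (g y) = d x y) ->
  forall n x y, d (Nat.iter n g x) (Nat.iter n g y) = d x y.
Proof. intros Hg n. induction n; intros x y; simpl; rewrite ?Hg; auto. Qed.

Lemma iter_commute (X : Type) (g h : X -> X) :
  (forall x, h (g x) = g (h x)) -> forall n x, h (Nat.iter n g x) = Nat.iter n g (h x).
Proof. intros Hgh n. induction n; intros x; simpl; rewrite ?Hgh, ?IHn; auto. Qed.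

Lemma displacement_iter (X : Type) (d : X -> X -> R) (g h : X -> X) :
  (forall x y, d (g x) (g y) = d x y) -> (forall x, h (g x) = g (h x)) ->
  forall n x, d (h (Nat.iter n g x)) (Nat.iter n g x) = d (h x) x.
Proof.
  intros Hg Hgh n x. rewrite iter_commute by exact Hgh. apply iter_isometry_dist, Hg.
Qed.

(* The orbit also contains the [g^-n x]; these are as far from [x] as the [g^n x]. *)
Lemma unbounded_orbit_iter (X : Type) (d : X -> X -> R) (g : X -> X) x :
  is_metric X d -> (forall x y, d (g x) (g y) = d x y) ->
  ~ m_bounded X d (orbit X g x) -> forall M, exists n, M < d x (Nat.iter n g x).
Proof.
  intros Hd Hg Hx M. apply NNPP. intros HM. apply Hx. exists x, M.
  intros y [n [-> | Hy]]; apply Rnot_lt_le; intros Hlt; apply HM; exists n; [exact Hlt|].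
  rewrite <- (iter_isometry_dist X d g Hg n x y), <- Hy, (dist_sym X d Hd) in Hlt.
  exact Hlt.
Qed.

Theorem proposition19 (X : Type) (d : X -> X -> R) (g : X -> X) :
  CAT0 X d -> proper_space X d ->
  isometry X d g -> unbounded_orbits X d g ->
  exists c : R -> X, geodesic_ray X d c /\
    forall h : X -> X, centralizer X d g h -> fixes_boundary_point X d h c.
Proof.
  intros HC Hp [Hg _] [x0 Hx0]. pose proof HC as [Hd [Hgeo _]].
  destruct (choice (fun j n => INR j < d x0 (Nat.iter n g x0))) as [m Hm].
  { intros j. apply (unbounded_orbit_iter X d g x0 Hd Hg Hx0). }
  set (y := fun j => Nat.iter (m j) g x0).
  destruct (choice (fun j c => geodesic_seg X d c x0 (y j))) as [G HG].
  { intros j. apply Hgeo. }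
  destruct (cat0_geodesics_subsequence_converge X d HC x0 y G Hp) as [ns [c [Hlen Hc]]];
    [intros j; left; apply Hm | exact HG |].
  exists c. split.
  - apply (limit_of_geodesics_is_ray X d Hd x0 (fun k => y (ns k)) (fun k => G (ns k)));
      auto.
  - intros h [[Hh _] Hgh]. exists (d (h x0) x0). intros t Ht.
    enough (0 <= d (h (c t)) (c t) <= d (h x0) x0) by lra.
    apply (limit_dist_bounds X d Hd (fun k => h (G (ns k) t)) (fun k => G (ns k) t)).
    + apply converges_isometric_image; auto.
    + auto.
    + destruct (eventually_ge_of_ge_INR _ Hlen t) as [N HN].
      exists N. intros k Hk. split; [apply dist_nonneg, Hd|].
      apply (cat0_displacement_le_on_geodesic X d HC h Hh x0 (y (ns k))); auto.
      apply displacement_iter; auto.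
Qed.
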